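(* Let $\boldsymbol k$ be an algebraically closed field with $\operatorname{char}\boldsymbol k\neq 2$, let $V$ be a vector space over $\boldsymbol k$ of finite dimension $n$, and let $\mathcal C\subseteq V^*\otimes V^*\otimes V$ be the subspace of tensors fixed by the involution $\ell\otimes\ell'\otimes v\mapsto \ell'\otimes\ell\otimes v$. Then there is a nonempty (dense) open subset $U\subseteq\mathcal C$ such that for every $m\in U$ the $\boldsymbol k$-algebra $\{V,m\}$ is a simple commutative algebra with trivial automorphism group.
   Context: For $m=\sum\ell\otimes\ell'\otimes v\in V^*\otimes V^*\otimes V$, the $\boldsymbol k$-algebra $\{V,m\}$ is the (not necessarily associative) algebra structure on $V$ with product $ab:=\sum\ell(a)\ell'(b)v$. The algebra $\{V,m\}$ is commutative exactly when $m\in\mathcal C$. Simple means having no two-sided ideals other than $0$ and $V$ (the paper's proof shows nonexistence of two-sided ideals of dimension $d$ with $0<d<n$). The automorphism group of $\{V,m\}$ is the stabilizer of $m$ in $\mathrm{GL}(V)$ acting naturally on $V^*\otimes V^*\otimes V$. *)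

From HB Require Import structures.
From mathcomp Require Import all_boot all_order all_algebra.
Set Implicit Arguments. Unset Strict Implicit. Unset Printing Implicit Defensive.
Import Order.TTheory GRing.Theory.
Local Open Scope ring_scope.

(* V = 'rV[k]_n (coordinates w.r.t. a fixed basis e_0..e_{n-1}).
   A tensor m in V* (x) V* (x) V is given by its coordinates m (i,j,l)
   w.r.t. the basis e_i^* (x) e_j^* (x) e_l. *)
Definition tensor (k : Type) (n : nat) := {ffun 'I_n * 'I_n * 'I_n -> k}.

Definition tswap (k : Type) (n : nat) (m : tensor k n) : tensor k n :=
  [ffun t : 'I_n * 'I_n * 'I_n => m (t.1.2, t.1.1, t.2)].

Definition commC (k : eqType) (n : nat) : pred (tensor k n) :=
  fun m => tswap m == m.

(* the product of the algebra {V, m}: a b = sum l(a) l'(b) v *)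
Definition tmul (k : pzRingType) (n : nat) (m : tensor k n) (a b : 'rV[k]_n)
  : 'rV[k]_n :=
  \row_(l < n) \sum_(i < n) \sum_(j < n) a 0 i * b 0 j * m (i, j, l).

(* subspaces of V are row spaces of n x n matrices *)
Definition is_ideal (k : fieldType) (n : nat) (m : tensor k n) (I : 'M[k]_n) :=
  forall a u : 'rV[k]_n, (u <= I)%MS ->
    (tmul m a u <= I)%MS /\ (tmul m u a <= I)%MS.

Definition is_simple (k : fieldType) (n : nat) (m : tensor k n) :=
  forall I : 'M[k]_n, is_ideal m I -> (I == (0 : 'M[k]_n))%MS \/ (I == (1%:M : 'M[k]_n))%MS.

Definition is_commutative (k : pzRingType) (n : nat) (m : tensor k n) :=
  forall a b : 'rV[k]_n, tmul m a b = tmul m b a.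

Definition is_automorphism (k : fieldType) (n : nat) (m : tensor k n)
  (A : 'M[k]_n) :=
  A \in unitmx /\ forall a b : 'rV[k]_n, tmul m (a *m A) (b *m A) = tmul m a b *m A.

Definition trivial_aut (k : fieldType) (n : nat) (m : tensor k n) :=
  forall A : 'M[k]_n, is_automorphism m A -> A = 1%:M.

Inductive polyfun (k : pzRingType) (n : nat) : (tensor k n -> k) -> Prop :=
| polyfun_cst (c : k) : polyfun (fun _ => c)
| polyfun_coord (t : 'I_n * 'I_n * 'I_n) : polyfun (fun m => m t)
| polyfun_add f g : polyfun f -> polyfun g -> polyfun (fun m => f m + g m)
| polyfun_mul f g : polyfun f -> polyfun g -> polyfun (fun m => f m * g m).

(* Zariski-open subsets of C (subspace topology): complements in C of the
   common zero locus of a family S of polynomial functions *)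
Definition zariski_open_in_C (k : pzRingType) (n : nat) (U : pred (tensor k n)) :=
  exists S : (tensor k n -> k) -> Prop,
    (forall f, S f -> polyfun f) /\
    forall m, U m <-> (commC m /\ exists2 f, S f & f m != 0).

(* The trace form B(a, b) = tr(L_(ab)) of {V, m} is invariant under automorphisms.
   When it is nondegenerate, the element u representing a |-> tr(L_a) through B is
   fixed by every automorphism, hence so are u, uu, u(uu), ...; if these span V, the
   only automorphism is the identity. A two-sided ideal is stable under left
   multiplications, so if the words L_(e_0)^(n-1-a) L_(e_(n-1)) L_(e_0)^b span all
   matrices, a nonzero ideal is V. Both conditions are the nonvanishing of polynomial
   determinants in the coordinates of m, and each holds at an explicit symmetric
   tensor; restricted to the line through these two tensors, the product of the
   determinants is a nonzero polynomial, which has a nonroot as k is algebraically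
   closed. *)

From HB Require Import structures.
From mathcomp Require Import all_boot all_order all_algebra.
From mathcomp Require Import ring zify.
From Stdlib Require Import FunctionalExtensionality.
Set Implicit Arguments. Unset Strict Implicit. Unset Printing Implicit Defensive.
Import Order.TTheory GRing.Theory.
Local Open Scope ring_scope.

Section PolynomialFunctions.
Variables (k : comNzRingType) (n : nat).
Notation T := (tensor k n).

Lemma polyfun_ext (f g : T -> k) : f =1 g -> polyfun f -> polyfun g.
Proof. by move=> /functional_extensionality ->. Qed.

Lemma polyfun_sum (I : Type) (r : seq I) (P : pred I) (F : I -> T -> k) :
  (forall i, polyfun (F i)) -> polyfun (fun m => \sum_(i <- r | P i) F i m).
Proof.
move=> polyF; elim: r => [|x r IHr].
  by apply: polyfun_ext (polyfun_cst _ 0) => m; rewrite big_nil.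
case Px: (P x); last by apply: polyfun_ext IHr => m; rewrite big_cons Px.
by apply: polyfun_ext (polyfun_add (polyF x) IHr) => m; rewrite big_cons Px.
Qed.

Lemma polyfun_prod (I : Type) (r : seq I) (P : pred I) (F : I -> T -> k) :
  (forall i, polyfun (F i)) -> polyfun (fun m => \prod_(i <- r | P i) F i m).
Proof.
move=> polyF; elim: r => [|x r IHr].
  by apply: polyfun_ext (polyfun_cst _ 1) => m; rewrite big_nil.
case Px: (P x); last by apply: polyfun_ext IHr => m; rewrite big_cons Px.
by apply: polyfun_ext (polyfun_mul (polyF x) IHr) => m; rewrite big_cons Px.
Qed.

Definition polymx p q (M : T -> 'M[k]_(p, q)) := forall i j, polyfun (fun m => M m i j).

Lemma polymx_cst p q (M : 'M[k]_(p, q)) : polymx (fun _ => M).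
Proof. by move=> i j; apply: polyfun_cst. Qed.

Lemma polymx_tr p q (M : T -> 'M[k]_(p, q)) : polymx M -> polymx (fun m => (M m)^T).
Proof. by move=> polyM i j; apply: polyfun_ext (polyM j i) => m; rewrite mxE. Qed.

Lemma polymx_mul p q r (M : T -> 'M[k]_(p, q)) (N : T -> 'M[k]_(q, r)) :
  polymx M -> polymx N -> polymx (fun m => M m *m N m).
Proof.
move=> polyM polyN i j.
apply: polyfun_ext (polyfun_sum _ xpredT (fun l => polyfun_mul (polyM i l) (polyN l j))).
by move=> m; rewrite mxE.
Qed.

Lemma polymx_exp p (M : T -> 'M[k]_p.+1) e : polymx M -> polymx (fun m => M m ^+ e).
Proof.
move=> polyM; elim: e => [|e IHe] i j.
  by apply: polyfun_ext (polymx_cst 1 i j) => m; rewrite expr0.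
by apply: polyfun_ext (polymx_mul polyM IHe i j) => m; rewrite exprS.
Qed.

Lemma polyfun_det p (M : T -> 'M[k]_p) : polymx M -> polyfun (fun m => \det (M m)).
Proof.
move=> polyM; apply: polyfun_sum => s; apply: polyfun_mul; first exact: polyfun_cst.
by apply: polyfun_prod => i; apply: polyM.
Qed.

Lemma polymx_adj p (M : T -> 'M[k]_p) : polymx M -> polymx (fun m => \adj (M m)).
Proof.
move=> polyM i j.
apply: (@polyfun_ext (fun m => (-1) ^+ (j + i) * \det (row' j (col' i (M m))))).
  by move=> m; rewrite mxE.
apply: polyfun_mul; first exact: polyfun_cst.
by apply: polyfun_det => a b; apply: polyfun_ext (polyM _ _) => m; rewrite !mxE.
Qed.

Definition tensor_line (m0 m1 : T) (t : k) : T := [ffun x => m0 x + t * (m1 x - m0 x)].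

Lemma tensor_line0 (m0 m1 : T) : tensor_line m0 m1 0 = m0.
Proof. by apply/ffunP => x; rewrite ffunE mul0r addr0. Qed.

Lemma tensor_line1 (m0 m1 : T) : tensor_line m0 m1 1 = m1.
Proof. by apply/ffunP => x; rewrite ffunE mul1r addrC subrK. Qed.

Lemma polyfun_line (m0 m1 : T) f :
  polyfun f -> exists P : {poly k}, forall t, f (tensor_line m0 m1 t) = P.[t].
Proof.
elim=> [c|x|g h _ [P gP] _ [Q hQ]|g h _ [P gP] _ [Q hQ]].
- by exists c%:P => t; rewrite hornerC.
- exists ((m0 x)%:P + 'X * (m1 x - m0 x)%:P) => t.
  by rewrite ffunE hornerD hornerC hornerM hornerX hornerC.
- by exists (P + Q) => t; rewrite gP hQ hornerD.
- by exists (P * Q) => t; rewrite gP hQ hornerM.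
Qed.

End PolynomialFunctions.

Section CommutativeTensors.
Variables (k : comNzRingType) (n : nat).
Notation T := (tensor k n).

Lemma commCP (m : T) : reflect (forall i j l, m (j, i, l) = m (i, j, l)) (commC m).
Proof.
apply: (iffP eqP) => [symm i j l|symm].
  by have := congr1 (fun f : T => f (i, j, l)) symm; rewrite ffunE.
by apply/ffunP => -[[i j] l]; rewrite ffunE.
Qed.

Lemma commC_line (m0 m1 : T) t : commC m0 -> commC m1 -> commC (tensor_line m0 m1 t).
Proof. by move=> /commCP sym0 /commCP sym1; apply/commCP => i j l; rewrite !ffunE sym0 sym1. Qed.

Lemma commC_commutative (m : T) : commC m -> is_commutative m.
Proof.
move=> /commCP symm a b; apply/rowP => l; rewrite !mxE exchange_big /=.
by apply: eq_bigr => i _; apply: eq_bigr => j _; rewrite symm; ring.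
Qed.

Definition nonvanishing_in_C (f : T -> k) : pred T := fun m => commC m && (f m != 0).

Lemma zariski_open_nonvanishing (f : T -> k) : polyfun f -> zariski_open_in_C (nonvanishing_in_C f).
Proof.
move=> polyf; exists (eq^~ f); split=> [g -> //|m].
split=> [/andP[Cm fm]|[Cm [g -> fm]]]; last by rewrite /nonvanishing_in_C Cm fm.
by split=> //; exists f.
Qed.

End CommutativeTensors.

Lemma nonvanishing_in_C_prod (k : closedFieldType) n {f g : tensor k n -> k} {m0 m1 : tensor k n} :
  polyfun f -> polyfun g -> commC m0 -> commC m1 -> f m0 != 0 -> g m1 != 0 ->
  exists m, nonvanishing_in_C (fun m => f m * g m) m.
Proof.
move=> polyf polyg Cm0 Cm1 fm0 gm1.
have [P fP] := polyfun_line m0 m1 polyf; have [Q gQ] := polyfun_line m0 m1 polyg.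
have P_neq0 : P != 0 by apply: contraNneq fm0 => P0; rewrite -(tensor_line0 m0 m1) fP P0 horner0.
have Q_neq0 : Q != 0 by apply: contraNneq gm1 => Q0; rewrite -(tensor_line1 m0 m1) gQ Q0 horner0.
have /closed_nonrootP [t PQt] := mulf_neq0 P_neq0 Q_neq0.
by exists (tensor_line m0 m1 t); rewrite /nonvanishing_in_C commC_line //= fP gQ -hornerM.
Qed.

Section TraceForm.
Variables (k : fieldType) (n : nat).
Notation T := (tensor k n).
Implicit Types (m : T) (a b : 'rV[k]_n).

Definition lmul_mx m a : 'M[k]_n := \matrix_(j, l) \sum_i a 0 i * m (i, j, l).

Lemma tmul_lmul m a b : tmul m a b = b *m lmul_mx m a.
Proof.
apply/rowP => l; rewrite !mxE exchange_big; apply: eq_bigr => j _.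
by rewrite mxE mulr_sumr; apply: eq_bigr => i _; ring.
Qed.

Lemma lmul_mxZ m c a : lmul_mx m (c *: a) = c *: lmul_mx m a.
Proof.
apply/matrixP => j l; rewrite !mxE mulr_sumr.
by apply: eq_bigr => i _; rewrite mxE; ring.
Qed.

Lemma lmul_delta m c j l : lmul_mx m (delta_mx 0 c) j l = m (c, j, l).
Proof.
rewrite mxE (bigD1 c) //= big1 ?addr0 => [|i /negbTE ic]; first by rewrite mxE !eqxx mul1r.
by rewrite mxE ic andbF mul0r.
Qed.

Definition trace_col m : 'cV[k]_n := \col_i \sum_j m (i, j, j).
Definition trace_form m : 'M[k]_n := \matrix_(i, j) \sum_l m (i, j, l) * trace_col m l 0.
(* [trace_dual m] represents the trace through the trace form, up to the factor
   [\det (trace_form m)]; the adjugate keeps it polynomial in [m]. *)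
Definition trace_dual m : 'rV[k]_n := (trace_col m)^T *m \adj (trace_form m).
Definition dual_power m e : 'rV[k]_n := iter e (tmul m (trace_dual m)) (trace_dual m).
Definition dual_powers_mx m : 'M[k]_n := \matrix_(e < n) dual_power m e.
Definition aut_disc m := \det (trace_form m) * \det (dual_powers_mx m).

Lemma mxtrace_lmul m a : \tr (lmul_mx m a) = (a *m trace_col m) 0 0.
Proof.
rewrite /mxtrace !mxE; under eq_bigr do rewrite mxE.
by rewrite exchange_big; apply: eq_bigr => i _; rewrite mxE mulr_sumr.
Qed.

Lemma trace_formE m a b : (a *m trace_form m *m b^T) 0 0 = (tmul m a b *m trace_col m) 0 0.
Proof.
rewrite !mxE.
transitivity (\sum_i \sum_j \sum_l a 0 i * b 0 j * m (i, j, l) * trace_col m l 0).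
  under eq_bigr do rewrite !mxE big_distrl /=.
  rewrite exchange_big /=; apply: eq_bigr => i _; apply: eq_bigr => j _.
  by rewrite !mxE big_distrr big_distrl /=; apply: eq_bigr => l _; ring.
under [RHS]eq_bigr do rewrite !mxE big_distrl /=.
rewrite [RHS]exchange_big /=; apply: eq_bigr => i _.
under [RHS]eq_bigr do rewrite big_distrl /=.
by rewrite [RHS]exchange_big /=; apply: eq_bigr => j _; apply: eq_bigr => l _; rewrite mxE.
Qed.

Lemma delta_mulmx_trmx p q (M : 'M[k]_(p, q)) i j :
  ((delta_mx 0 i : 'rV[k]_p) *m M *m (delta_mx 0 j : 'rV[k]_q)^T) 0 0 = M i j.
Proof. by rewrite trmx_delta -rowE -colE !mxE. Qed.

Section Automorphism.
Variables (m : T) (A : 'M[k]_n).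
Hypothesis autA : is_automorphism m A.

Lemma lmul_aut a : A *m lmul_mx m (a *m A) = lmul_mx m a *m A.
Proof.
case: autA => _ mulA; apply/row_matrixP => i.
by rewrite row_mul (row_mul i (lmul_mx m a)) rowE -tmul_lmul mulA tmul_lmul -rowE.
Qed.

Lemma trace_aut a : (a *m A *m trace_col m) 0 0 = (a *m trace_col m) 0 0.
Proof.
case: (autA) => unitA _; rewrite -!mxtrace_lmul.
have -> : lmul_mx m (a *m A) = invmx A *m (lmul_mx m a *m A) by rewrite -lmul_aut mulKmx.
by rewrite mxtrace_mulC mulmxK.
Qed.

Lemma trace_col_aut : A *m trace_col m = trace_col m.
Proof.
apply/colP => i; have coordE (v : 'cV[k]_n) : v i 0 = ((delta_mx 0 i : 'rV[k]_n) *m v) 0 0.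
  by rewrite -rowE mxE.
by rewrite coordE mulmxA trace_aut -coordE.
Qed.

Lemma trace_form_aut : A *m trace_form m *m A^T = trace_form m.
Proof.
case: (autA) => _ mulA; apply/matrixP => i j.
rewrite -delta_mulmx_trmx -[RHS]delta_mulmx_trmx.
rewrite !mulmxA -[_ *m A^T *m _]mulmxA -trmx_mul !trace_formE.
by rewrite mulA trace_aut.
Qed.

Hypothesis trace_form_nondeg : \det (trace_form m) != 0.

Lemma trace_dual_aut : trace_dual m *m A = trace_dual m.
Proof.
case: (autA) => unitA _.
have unitB : trace_form m \in unitmx by rewrite unitmxE unitfE.
have unitAt : A^T \in unitmx by rewrite unitmx_tr.
have dualE : trace_dual m *m trace_form m = \det (trace_form m) *: (trace_col m)^T.
  by rewrite /trace_dual -mulmxA mul_adj_mx mul_mx_scalar.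
apply: (can_inj (mulmxK unitB)); apply: (can_inj (mulmxK unitAt)).
rewrite -(mulmxA (trace_dual m *m A)) -(mulmxA (trace_dual m)) (mulmxA A).
by rewrite trace_form_aut dualE -scalemxAl -trmx_mul trace_col_aut.
Qed.

Lemma dual_power_aut e : dual_power m e *m A = dual_power m e.
Proof.
case: (autA) => _ mulA; elim: e => [|e IHe] /=; first exact: trace_dual_aut.
by rewrite -mulA IHe trace_dual_aut.
Qed.

End Automorphism.

Lemma trivial_aut_of_disc m : aut_disc m != 0 -> trivial_aut m.
Proof.
rewrite mulf_eq0 negb_or => /andP [detB detW] A autA.
have unitW : dual_powers_mx m \in unitmx by rewrite unitmxE unitfE.
have fixW : dual_powers_mx m *m A = dual_powers_mx m.
  by apply/row_matrixP => e; rewrite row_mul rowK dual_power_aut.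
by rewrite -[A](mulKmx unitW) fixW mulVmx.
Qed.

Lemma polymx_lmul (a : T -> 'rV[k]_n) : polymx a -> polymx (fun m => lmul_mx m (a m)).
Proof.
move=> polya j l.
apply: polyfun_ext (polyfun_sum _ xpredT
  (fun i => polyfun_mul (polya 0 i) (polyfun_coord _ (i, j, l)))).
by move=> m; rewrite mxE.
Qed.

Lemma polymx_trace_col : polymx trace_col.
Proof.
move=> i j; apply: polyfun_ext (polyfun_sum _ xpredT (fun l => polyfun_coord _ (i, l, l))).
by move=> m; rewrite mxE.
Qed.

Lemma polymx_trace_form : polymx trace_form.
Proof.
move=> i j; apply: polyfun_ext (polyfun_sum _ xpredT
  (fun l => polyfun_mul (polyfun_coord _ (i, j, l)) (polymx_trace_col l 0))).
by move=> m; rewrite mxE.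
Qed.

Lemma polymx_dual_power e : polymx (dual_power ^~ e).
Proof.
have polyu : polymx trace_dual.
  exact: polymx_mul (polymx_tr polymx_trace_col) (polymx_adj polymx_trace_form).
elim: e => [|e IHe] //= i j.
by apply: polyfun_ext (polymx_mul IHe (polymx_lmul polyu) i j) => m; rewrite tmul_lmul.
Qed.

Lemma polyfun_aut_disc : polyfun aut_disc.
Proof.
apply: polyfun_mul; first exact: polyfun_det polymx_trace_form.
apply: polyfun_det => e l; apply: polyfun_ext (polymx_dual_power e 0 l) => m.
by rewrite mxE.
Qed.

End TraceForm.

Section Simplicity.
Variables (k : fieldType) (n' : nat).
Notation N := n'.+1.
Notation T := (tensor k N).
Implicit Types (m : T).

Definition lmul_first m := lmul_mx m (delta_mx 0 0).
Definition lmul_last m := lmul_mx m (delta_mx 0 ord_max).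
Definition word m (ab : 'I_N * 'I_N) : 'M[k]_N :=
  lmul_first m ^+ (n' - ab.1) *m lmul_last m *m lmul_first m ^+ ab.2.

Definition mxvec_unindex (p : 'I_(N * N)) : 'I_N * 'I_N :=
  enum_val (cast_ord (esym (mxvec_cast N N)) p).

Definition words_mx m : 'M[k]_(N * N) := \matrix_p mxvec (word m (mxvec_unindex p)).
Definition simple_disc m := \det (words_mx m).

Lemma mxvec_unindexK i j : mxvec_unindex (mxvec_index i j) = (i, j).
Proof. by rewrite /mxvec_unindex /mxvec_index cast_ordK enum_rankK. Qed.

Lemma ideal_lmul m (I : 'M[k]_N) a (u : 'rV[k]_N) :
  is_ideal m I -> (u <= I)%MS -> (u *m lmul_mx m a <= I)%MS.
Proof. by move=> idealI uI; rewrite -tmul_lmul; case: (idealI a u uI). Qed.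

Lemma ideal_lmul_exp m (I : 'M[k]_N) a e (u : 'rV[k]_N) :
  is_ideal m I -> (u <= I)%MS -> (u *m lmul_mx m a ^+ e <= I)%MS.
Proof.
move=> idealI; elim: e u => [|e IHe] u uI; first by rewrite expr0 mulmx1.
by rewrite exprS mulmxA; apply/IHe/ideal_lmul.
Qed.

Lemma ideal_word m (I : 'M[k]_N) ab (u : 'rV[k]_N) :
  is_ideal m I -> (u <= I)%MS -> (u *m word m ab <= I)%MS.
Proof.
move=> idealI uI; rewrite /word !mulmxA.
by apply/ideal_lmul_exp/ideal_lmul/ideal_lmul_exp.
Qed.

Lemma nz_row_coord (I : 'M[k]_N) : I != 0 ->
  exists i j, row i I 0 j != 0.
Proof.
move=> nzI; have [i nz_i] : exists i, row i I != 0.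
  apply/existsP; apply: contraNT nzI => /existsPn zrows; apply/eqP/row_matrixP => i.
  by rewrite row0; apply/eqP/negbNE/zrows.
have [j nz_j] : exists j, row i I 0 j != 0.
  apply/existsP; apply: contraNT nz_i => /existsPn zcoords; apply/eqP/rowP => j.
  by rewrite [RHS]mxE; apply/eqP/negbNE/zcoords.
by exists i, j.
Qed.

Lemma simple_of_disc m : simple_disc m != 0 -> is_simple m.
Proof.
move=> detG I idealI; have [->|nzI] := eqVneq I 0; first by left; rewrite submx_refl.
right; rewrite submx1; apply/row_subP => l; rewrite row1.
have [i [j nz_ij]] := nz_row_coord nzI.
set u := row i I in nz_ij; have uI : (u <= I)%MS by apply: row_sub.
have /submxP [D vecD] : (mxvec (delta_mx j l : 'M[k]_N) <= words_mx m)%MS.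
  by apply: submx_full; rewrite row_full_unit unitmxE unitfE.
have deltaE : (delta_mx j l : 'M[k]_N) = \sum_p D 0 p *: word m (mxvec_unindex p).
  apply: (can_inj mxvecK); rewrite vecD mulmx_sum_row linear_sum.
  by apply: eq_bigr => p _; rewrite rowK linearZ.
have u_delta : u *m delta_mx j l = u 0 j *: delta_mx 0 l.
  apply/rowP => c; rewrite !mxE (bigD1 j) //= big1 => [|j' /negbTE j'j].
    by rewrite !mxE eqxx /= addr0.
  by rewrite !mxE j'j mulr0.
have : (u *m delta_mx j l <= I)%MS.
  rewrite deltaE mulmx_sumr; apply: summx_sub => p _; rewrite -scalemxAr.
  exact/scalemx_sub/ideal_word.
by rewrite u_delta => /(scalemx_sub (u 0 j)^-1); rewrite scalerA mulVf // scale1r.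
Qed.

Lemma polyfun_simple_disc : polyfun simple_disc.
Proof.
apply: polyfun_det => p q.
have polyX : polymx lmul_first by apply/polymx_lmul/polymx_cst.
have polyY : polymx lmul_last by apply/polymx_lmul/polymx_cst.
have polyW : polymx (word ^~ (mxvec_unindex p)).
  exact/polymx_mul/polymx_exp/polyX/polymx_mul/polyY/polymx_exp.
case/mxvec_indexP: q => a b; apply: polyfun_ext (polyW a b) => m.
by rewrite [RHS]mxE mxvecE.
Qed.

End Simplicity.

Lemma sum_indicator_mul (R : pzSemiRingType) (n : nat) (F : 'I_n.+1 -> R) (c : nat) :
  \sum_(l < n.+1) ((l : nat) == c)%:R * F l = if (c < n.+1)%N then F (inord c) else 0.
Proof.
case: ltnP => [c_lt|c_ge].
  rewrite (bigD1 (inord c)) //= inordK // eqxx mul1r big1 ?addr0 // => l l_neq.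
  suff /negbTE -> : (l : nat) != c by rewrite mul0r.
  by apply: contra l_neq => /eqP <-; rewrite inord_val.
apply: big1 => l _; suff /negbTE -> : (l : nat) != c by rewrite mul0r.
by apply: contraTneq c_ge => <-; rewrite -ltnNge.
Qed.

Section ShiftWitness.
Variables (k : fieldType) (n' : nat).
Notation N := n'.+1.
Notation T := (tensor k N).

(* e_0 e_j = e_(j+1) and e_n' e_n' = e_0: left multiplication by e_0 is the shift and by
   e_n' the matrix unit E_(n',0), so the words are exactly the matrix units E_(a,b). *)
Definition shift_rule (i j l : nat) : bool :=
  if (i == n') && (j == n') then l == 0%N
  else if i == 0%N then l == j.+1
  else if j == 0%N then l == i.+1 else false.

Definition shift_tensor : T := [ffun x : 'I_N * 'I_N * 'I_N => (shift_rule x.1.1 x.1.2 x.2)%:R].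

Lemma commC_shift : commC shift_tensor.
Proof.
apply/commCP => i j l; rewrite !ffunE /= /shift_rule andbC.
by case: (_ && _) => //; case: (nat_of_ord i) => [|?]; case: (nat_of_ord j).
Qed.

Lemma lmul_first_shift_exp e : (e <= n')%N ->
  lmul_first shift_tensor ^+ e = \matrix_(i, j) (((j : nat) == i + e)%N%:R : k).
Proof.
elim: e => [_|e IHe e_lt]; first by apply/matrixP => i j; rewrite expr0 !mxE addn0 eq_sym.
rewrite exprSr IHe ?(ltnW e_lt) //; apply/matrixP => i j; rewrite !mxE.
under eq_bigr do rewrite mxE /lmul_first lmul_delta ffunE /=.
rewrite sum_indicator_mul; case: ltnP => [ie_lt|ie_ge]; last first.
  by rewrite ltn_eqF //; have := ltn_ord j; lia.
rewrite /shift_rule inordK // (_ : (0 == n') = false) ?addnS //.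
by case: n' e_lt.
Qed.

Lemma lmul_last_shift : lmul_last shift_tensor = delta_mx ord_max 0.
Proof.
apply/matrixP => i j; rewrite lmul_delta ffunE !mxE /= /shift_rule eqxx /=.
case: (i =P ord_max) => [->|i_neq] /=; first by rewrite eqxx.
have i_lt : (i < n')%N.
  by rewrite ltn_neqAle -ltnS ltn_ord andbT; apply/eqP => i_n; apply/i_neq/val_inj.
rewrite ltn_eqF // (ltn_eqF (ltn_ord j)); case: eqP => [n'0|_]; first lia.
by case: ifP.
Qed.

Lemma word_shift ab : word shift_tensor ab = delta_mx ab.1 ab.2.
Proof.
case: ab => a b; rewrite /word /= lmul_last_shift.
rewrite (lmul_first_shift_exp (leq_subr _ _)) (lmul_first_shift_exp (e := b)); last first.
  by rewrite -ltnS.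
have -> : \matrix_(i < N, j < N) (((j : nat) == i + (n' - a))%N%:R : k) *m
    delta_mx ord_max 0 = delta_mx a 0 :> 'M[k]_N.
  apply/matrixP => i l; rewrite !mxE (bigD1 ord_max) //= big1 => [|p /negbTE p_neq].
    rewrite !mxE eqxx addr0 /= -natrM mulnb; congr ((_ && _)%:R).
    have a_lt := ltn_ord a; apply/eqP/eqP => [n'_eq|->]; last lia.
    by apply/val_inj => /=; lia.
  by rewrite !mxE p_neq mulr0.
apply/matrixP => i j; rewrite !mxE (bigD1 ord0) //= big1 => [|l /negbTE l_neq].
  by rewrite !mxE eqxx andbT addr0 add0n -natrM mulnb.
by rewrite !mxE l_neq andbF mul0r.
Qed.

Lemma words_mx_shift : words_mx shift_tensor = 1%:M.
Proof.
apply/row_matrixP => p; rewrite rowK row1.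
by case/mxvec_indexP: p => a b; rewrite mxvec_unindexK word_shift mxvec_delta.
Qed.

Lemma simple_disc_shift : simple_disc shift_tensor != 0.
Proof. by rewrite /simple_disc words_mx_shift det1 oner_eq0. Qed.

End ShiftWitness.

Section RigidWitness.
Variables (k : fieldType) (n' : nat).
Notation N := n'.+1.
Notation T := (tensor k N).

(* e_0 e_0 = e_0 + e_1, e_0 e_j = e_(j+1) and e_i e_j = [i + j = N] e_0 for i, j > 0.
   Only e_0 has nonzero trace, the trace form pairs e_i with e_(-i mod N), the trace
   dual is a multiple of e_0 and its powers are multiples of the prefix sums
   e_0 + ... + e_e, so that [dual_powers_mx] is triangular. *)
Definition first_factor_rule (j l : nat) : bool := ((j == 0) && (l == 0) || (l == j.+1))%N.

Definition rigid_rule (i j l : nat) : bool :=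
  if i == 0%N then first_factor_rule j l else if j == 0%N then first_factor_rule i l
  else (l == 0) && (i + j == N)%N.

Definition rigid_tensor : T := [ffun x : 'I_N * 'I_N * 'I_N => (rigid_rule x.1.1 x.1.2 x.2)%:R].

Definition neg_index (i : nat) : nat := if i == 0%N then 0%N else (N - i)%N.

Definition prefix_sum (e : nat) : 'rV[k]_N := \row_(l < N) (l <= e)%N%:R.

Lemma commC_rigid : commC rigid_tensor.
Proof.
apply/commCP => i j l; rewrite !ffunE /= /rigid_rule.
by case: (nat_of_ord i) => [|?]; case: (nat_of_ord j) => [|?] //=; rewrite addnC.
Qed.

Lemma first_factor_ruleE j l : first_factor_rule j l = (j == l.-1).
Proof. by rewrite /first_factor_rule; case: l => [|l]; case: j => [|j] //=; rewrite eq_sym. Qed.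

Lemma rigid_rule_diag l j : rigid_rule l j j = (l == 0) && (j == 0)%N.
Proof.
rewrite /rigid_rule; case: l => [|l]; case: j => [|j] //=.
by rewrite first_factor_ruleE /= gtn_eqF.
Qed.

Lemma rigid_rule_first (i j : nat) :
  (i < N)%N -> (j < N)%N -> rigid_rule i j 0 = (j == neg_index i).
Proof.
move=> i_lt j_lt; rewrite /rigid_rule /neg_index.
case: (i =P 0%N) => [_|i_neq0] /=; first by rewrite first_factor_ruleE.
by case: (j =P 0%N) => [j0|j_neq0] /=; rewrite ?first_factor_ruleE; apply/eqP/eqP; lia.
Qed.

Lemma neg_index_lt (i : 'I_N) : (neg_index i < N)%N.
Proof. by have := ltn_ord i; rewrite /neg_index; case: eqP => //; lia. Qed.

Lemma neg_indexK (i : 'I_N) : neg_index (neg_index i) = i.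
Proof.
have := ltn_ord i; rewrite /neg_index.
by case: (nat_of_ord i =P 0%N) => [->|i_neq0] //= i_lt; case: eqP; lia.
Qed.

Lemma trace_col_rigid : trace_col rigid_tensor = \col_(l < N) (l == 0 :> nat)%:R.
Proof.
apply/colP => l; rewrite !mxE.
under eq_bigr do rewrite ffunE /= rigid_rule_diag andbC -mulnb natrM.
by rewrite sum_indicator_mul.
Qed.

Lemma trace_form_rigid : trace_form rigid_tensor = \matrix_(i, j) (j == neg_index i :> nat)%:R.
Proof.
apply/matrixP => i j; rewrite !mxE.
under eq_bigr do rewrite trace_col_rigid mxE mulrC.
by rewrite sum_indicator_mul /= ffunE /= inordK // rigid_rule_first.
Qed.

Lemma trace_form_rigid_sqr : trace_form rigid_tensor *m trace_form rigid_tensor = 1%:M.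
Proof.
rewrite trace_form_rigid; apply/matrixP => i j; rewrite !mxE.
under eq_bigr do rewrite !mxE.
rewrite sum_indicator_mul neg_index_lt inordK ?neg_index_lt // neg_indexK.
by rewrite eq_sym.
Qed.

Lemma det_trace_form_rigid : \det (trace_form rigid_tensor) != 0.
Proof.
have := congr1 determinant trace_form_rigid_sqr; rewrite det_mulmx det1.
by apply: contra_eq_neq => ->; rewrite mul0r eq_sym oner_eq0.
Qed.

Lemma trace_dual_rigid : trace_dual rigid_tensor = \det (trace_form rigid_tensor) *: prefix_sum 0.
Proof.
have adjE : \adj (trace_form rigid_tensor) =
    \det (trace_form rigid_tensor) *: trace_form rigid_tensor.
  by rewrite -[\adj _]mulmx1 -trace_form_rigid_sqr mulmxA mul_adj_mx mul_scalar_mx.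
rewrite /trace_dual adjE -scalemxAr; congr (_ *: _); apply/rowP => j; rewrite !mxE.
under eq_bigr do rewrite trace_col_rigid trace_form_rigid !mxE.
by rewrite sum_indicator_mul /= inordK // /neg_index /= leqn0.
Qed.

Lemma lmul_first_prefix :
  lmul_mx rigid_tensor (prefix_sum 0) = \matrix_(j, l) (j == l.-1 :> nat)%:R.
Proof.
apply/matrixP => j l; rewrite !mxE.
under eq_bigr do rewrite mxE leqn0.
by rewrite sum_indicator_mul /= ffunE /= inordK // /rigid_rule /= first_factor_ruleE.
Qed.

Lemma prefix_sum_step e : prefix_sum e *m lmul_mx rigid_tensor (prefix_sum 0) = prefix_sum e.+1.
Proof.
rewrite lmul_first_prefix; apply/rowP => l; rewrite !mxE.
under eq_bigr do rewrite !mxE mulrC.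
have l_lt := ltn_ord l; rewrite sum_indicator_mul ifT; last lia.
by rewrite inordK; [case: (nat_of_ord l) | lia].
Qed.

Lemma dual_power_rigid e :
  dual_power rigid_tensor e = \det (trace_form rigid_tensor) ^+ e.+1 *: prefix_sum e.
Proof.
elim: e => [|e IHe] /=; first by rewrite trace_dual_rigid expr1.
rewrite -/(dual_power rigid_tensor e) IHe tmul_lmul trace_dual_rigid lmul_mxZ.
by rewrite -scalemxAl -scalemxAr prefix_sum_step scalerA -exprSr.
Qed.

Lemma aut_disc_rigid : aut_disc rigid_tensor != 0.
Proof.
rewrite /aut_disc mulf_neq0 ?det_trace_form_rigid // det_trig; last first.
  apply/is_trig_mxP => i j ij; rewrite mxE dual_power_rigid !mxE.
  by rewrite leqNgt ij mulr0.
apply/prodf_neq0 => i _; rewrite mxE dual_power_rigid !mxE leqnn mulr1.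
by rewrite expf_neq0 // det_trace_form_rigid.
Qed.

End RigidWitness.

Lemma dim0_simple_commutative_rigid (k : fieldType) (m : tensor k 0) :
  [/\ is_simple m, is_commutative m & trivial_aut m].
Proof.
split=> [I _|a b|A _]; first by left; rewrite [I]flatmx0 submx_refl.
  by apply/rowP => -[].
by rewrite [A]flatmx0 [1%:M]flatmx0.
Qed.

Theorem theorem3 (k : closedFieldType) (n : nat) :
  (2 \notin [pchar k])%N ->
  exists U : pred (tensor k n),
    [/\ zariski_open_in_C U, (exists m, U m) &
        forall m, U m -> [/\ is_simple m, is_commutative m & trivial_aut m]].
Proof.
move=> _; case: n => [|n'].
  exists (nonvanishing_in_C (fun _ => 1)); split.
  - exact/zariski_open_nonvanishing/polyfun_cst.
  - by exists 0; rewrite /nonvanishing_in_C oner_neq0 andbT; apply/commCP => -[].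
  - by move=> m _; apply: dim0_simple_commutative_rigid.
exists (nonvanishing_in_C (fun m => simple_disc m * aut_disc m)); split.
- exact/zariski_open_nonvanishing/polyfun_mul/polyfun_aut_disc/polyfun_simple_disc.
- exact: nonvanishing_in_C_prod (@polyfun_simple_disc k n') (@polyfun_aut_disc k n'.+1)
    (@commC_shift k n') (@commC_rigid k n') (@simple_disc_shift k n') (@aut_disc_rigid k n').
- move=> m /andP [Cm]; rewrite mulf_eq0 negb_or => /andP [simple_m rigid_m].
  split; [exact: simple_of_disc | exact: commC_commutative | exact: trivial_aut_of_disc].
Qed.
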